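(* Suppose a language model produces a raw (pre-watermark) probability vector $p\in(0,1)^N$. Let $\gamma\in(0,1)$ with $\gamma N$ an integer, and randomly (uniformly) partition the indices $\{1,\dots,N\}$ into a green list $G$ of size $\gamma N$ and a red list $R$ of size $(1-\gamma)N$. Let $\delta>0$, $\alpha=\exp(\delta)$, and form the watermarked distribution by boosting the green list logits by $\delta$, i.e. $$\hat p_k=\frac{\alpha^{\mathbf{1}[k\in G]}\,p_k}{\sum_{i\in R}p_i+\alpha\sum_{i\in G}p_i}.$$ Sample a token index $k$ from the watermarked distribution. Then the probability (over the random partition and the sampling) that the token lies in the green list satisfies $$\mathbb{P}[k\in G]\ge \frac{\gamma\alpha}{1+(\alpha-1)\gamma}\,S\!\left(p,\frac{(1-\gamma)(\alpha-1)}{1+(\alpha-1)\gamma}\right).$$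
   Context: Spike entropy: for a discrete probability vector $p=(p_k)$ and a scalar $z$, the spike entropy of $p$ with modulus $z$ is $S(p,z)=\sum_k \frac{p_k}{1+z p_k}$. *)

From HB Require Import structures.
From mathcomp Require Import all_boot all_order all_algebra.
From mathcomp Require Import reals.
From mathcomp Require Import sequences exp.
Set Implicit Arguments. Unset Strict Implicit. Unset Printing Implicit Defensive.
Import Order.TTheory GRing.Theory Num.Theory.
Local Open Scope ring_scope.

Definition spike_entropy (R : realType) (N : nat) (p : 'I_N -> R) (z : R) : R :=
  \sum_(k < N) p k / (1 + z * p k).

Definition wm_dist (R : realType) (N : nat) (p : 'I_N -> R) (alpha : R)
  (G : {set 'I_N}) (k : 'I_N) : R :=
  (if k \in G then alpha else 1) * p k /
  (\sum_(i < N | i \notin G) p i + alpha * \sum_(i in G) p i).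

(* Probability that the sampled token is green, when G is uniform among
   subsets of size m and k is sampled from wm_dist p alpha G. *)
Definition green_prob (R : realType) (N m : nat) (p : 'I_N -> R) (alpha : R) : R :=
  (\sum_(G : {set 'I_N} | #|G| == m) \sum_(k in G) wm_dist p alpha G k)
  / (#|[set G : {set 'I_N} | #|G| == m]|)%:R.

From HB Require Import structures.
From mathcomp Require Import all_boot all_order all_algebra.
From mathcomp Require Import fingroup perm.
From mathcomp Require Import reals.
From mathcomp Require Import sequences exp.
From mathcomp Require Import ring lra.
Set Implicit Arguments. Unset Strict Implicit. Unset Printing Implicit Defensive.
Import Order.TTheory GRing.Theory Num.Theory.

(* Let D(G) = 1 + (alpha - 1) p(G), with p(G) the mass of G, be the
   normaliser of the watermarked distribution.  Exchanging the sums,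
   P[k in G] = C(N, m)^-1 sum_k alpha p_k sum_(G containing k) 1 / D(G).
   By convexity of 1/x the inner sum is at least n / v whenever v bounds the
   mean of D(G) over the n = gamma C(N, m) green lists containing k.  By
   symmetry a token i <> k lies in a uniform green list containing k with
   probability (m - 1) / (N - 1) <= gamma, so one can take
   v = 1 + (alpha - 1) (gamma + (1 - gamma) p_k), which gives the spike
   entropy. *)

Section SubsetCounting.
Variable T : finType.
Implicit Types (F : {set {set T}}) (s : {perm T}) (x y : T).

Lemma sum_card_mem F : \sum_x #|[set G in F | x \in G]| = \sum_(G in F) #|G|.
Proof.
rewrite (eq_bigr (fun x => \sum_(G | (G \in F) && (x \in G)) 1)); last first.
  by move=> x _; rewrite sum1dep_card.
rewrite (exchange_big_dep (mem F)) /=; last by move=> x G _ /andP[].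
apply: eq_bigr => G GF.
by rewrite -sum1_card; apply: eq_bigl => x; rewrite GF.
Qed.

Lemma card_mem_perm F s x : (forall G : {set T}, (s @: G \in F) = (G \in F)) ->
  #|[set G in F | s x \in G]| = #|[set G in F | x \in G]|.
Proof.
move=> sF; rewrite -!sum1dep_card (reindex_inj (imset_inj (@perm_inj _ s))) /=.
by apply: eq_bigl => G; rewrite sF mem_imset //; exact: perm_inj.
Qed.

Lemma card_mem_tperm F x y :
  (forall G : {set T}, (tperm x y @: G \in F) = (G \in F)) ->
  #|[set G in F | x \in G]| = #|[set G in F | y \in G]|.
Proof. by move/(card_mem_perm y); rewrite tpermR. Qed.

Lemma card_tperm_imset x y (G : {set T}) : #|tperm x y @: G| = #|G|.
Proof. by rewrite card_imset //; exact: perm_inj. Qed.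

Variable m : nat.

Lemma card_draws_mem x :
  #|T| * #|[set G : {set T} | #|G| == m & x \in G]| = m * 'C(#|T|, m).
Proof.
pose F := [set G : {set T} | #|G| == m].
have -> : [set G : {set T} | #|G| == m & x \in G] = [set G in F | x \in G].
  by apply/setP => G; rewrite !inE.
have -> : #|T| * #|[set G in F | x \in G]| = \sum_y #|[set G in F | y \in G]|.
  rewrite -sum_nat_const; apply: eq_bigr => y _.
  by apply: card_mem_tperm => G; rewrite !inE card_tperm_imset.
rewrite sum_card_mem -card_draws -/F mulnC -sum_nat_const.
by apply: eq_bigr => G; rewrite inE => /eqP.
Qed.

(* Counting the pairs (G, z) with z in G and G in F, the m-subsets containing x,
   gives m #|F| = #|F| + (#|T| - 1) c, where by symmetry c is the common count
   for every z <> x; moreover c <= #|F|. *)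
Lemma card_draws_mem2_le x y : x != y ->
  #|T| * #|[set G : {set T} | #|G| == m & (x \in G) && (y \in G)]| <=
  m * #|[set G : {set T} | #|G| == m & x \in G]|.
Proof.
move=> xy; have yx : y != x by rewrite eq_sym.
pose F := [set G : {set T} | #|G| == m & x \in G].
have -> : [set G : {set T} | #|G| == m & (x \in G) && (y \in G)] =
          [set G in F | y \in G].
  by apply/setP => G; rewrite !inE andbA.
have Fx : [set G in F | x \in G] = F.
  by apply/setP => G; rewrite !inE; case: (x \in G); rewrite ?andbF ?andbT.
have Fy z : z != x -> #|[set G in F | z \in G]| = #|[set G in F | y \in G]|.
  move=> zx; apply: card_mem_tperm => G; rewrite !inE card_tperm_imset.
  by rewrite -{1}(tpermD zx yx) mem_imset //; exact: perm_inj.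
have := sum_card_mem F; rewrite (bigD1 x) //= Fx.
rewrite (eq_bigr _ Fy) sum_nat_const cardC1.
rewrite (eq_bigr (fun=> m)); last by move=> G; rewrite inE => /andP[/eqP].
rewrite sum_nat_const -/F => sumF.
have cFy : #|[set G in F | y \in G]| <= #|F|.
  by apply/subset_leq_card/subsetP => G; rewrite inE => /andP[].
have /prednK <- : 0 < #|T| by apply/card_gt0P; exists x.
by rewrite mulSn [m * _]mulnC -sumF leq_add2r.
Qed.

End SubsetCounting.

Local Open Scope ring_scope.

Section DrawMass.
Variables (R : realFieldType) (T : finType) (m : nat) (gamma : R).
Hypothesis gamma_card : gamma * #|T|%:R = m%:R.

Lemma sum_draws_mem_mass_le (w : T -> R) x :
  (forall y, 0 <= w y) -> \sum_y w y = 1 ->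
  \sum_(G in [set G : {set T} | #|G| == m & x \in G]) \sum_(y in G) w y <=
  #|[set G : {set T} | #|G| == m & x \in G]|%:R * (gamma + (1 - gamma) * w x).
Proof.
move=> w_ge0 w_sum1.
set A := [set G : {set T} | #|G| == m & x \in G].
pose c y := #|[set G : {set T} | #|G| == m & (x \in G) && (y \in G)]|.
have cx : c x = #|A| by apply: eq_card => G; rewrite !inE andbb.
have -> : \sum_(G in A) \sum_(y in G) w y = \sum_y (c y)%:R * w y.
  rewrite (exchange_big_dep predT) //=; apply: eq_bigr => y _.
  rewrite sumr_const mulr_natl; congr (_ *+ _).
  by apply: eq_card => G; rewrite unfold_in !inE andbA.
have N0 : 0 < #|T|%:R :> R by rewrite ltr0n; apply/card_gt0P; exists x.
have c_le y : y != x -> (c y)%:R * #|T|%:R <= gamma * #|T|%:R * #|A|%:R :> R.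
  by move=> yx; rewrite gamma_card -!natrM ler_nat mulnC card_draws_mem2_le // eq_sym.
rewrite (bigD1 x) //= cx -(ler_pM2r N0) mulrDl mulr_suml.
have : \sum_(y | y != x) (c y)%:R * w y * #|T|%:R <=
       \sum_(y | y != x) gamma * #|T|%:R * #|A|%:R * w y.
  by apply: ler_sum => y yx; rewrite mulrAC ler_wpM2r // c_le.
rewrite -mulr_sumr.
have -> : \sum_(y | y != x) w y = 1 - w x by move: w_sum1; rewrite (bigD1 x) //=; lra.
by move=> h; lra.
Qed.

End DrawMass.

Section HarmonicMean.
Variable R : realFieldType.

Lemma tangent_le_invr (v x : R) : 0 < v -> 0 < x -> 2 / v - x / v ^+ 2 <= x^-1.
Proof.
move=> v0 x0; rewrite -subr_ge0.
have -> : x^-1 - (2 / v - x / v ^+ 2) = (v - x) ^+ 2 / (x * v ^+ 2).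
  by field; rewrite !gt_eqF.
by rewrite divr_ge0 ?sqr_ge0 // ltW // mulr_gt0 // exprn_gt0.
Qed.

Lemma card_divr_le_sum_invr (I : finType) (A : {pred I}) (x : I -> R) (v : R) :
  0 < v -> (forall i, i \in A -> 0 < x i) -> \sum_(i in A) x i <= #|A|%:R * v ->
  #|A|%:R / v <= \sum_(i in A) (x i)^-1.
Proof.
move=> v0 x0 sum_le.
apply: le_trans (ler_sum _ (fun i iA => tangent_le_invr v0 (x0 i iA))).
rewrite sumrB sumr_const -mulr_suml.
have : (\sum_(i in A) x i) / v ^+ 2 <= #|A|%:R / v.
  by rewrite ler_pdivrMr ?exprn_gt0 // expr2 mulrA divfK ?gt_eqF.
lra.
Qed.

End HarmonicMean.

Lemma spike_entropy_div (R : realType) (N : nat) (p : 'I_N -> R) (a c z : R) :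
  c != 0 -> (forall k, c + z * p k != 0) ->
  a / c * spike_entropy p (z / c) = \sum_k a * p k / (c + z * p k).
Proof.
move=> c0 cz0; rewrite /spike_entropy mulr_sumr; apply: eq_bigr => k _.
by field; rewrite c0 cz0.
Qed.

Section Watermark.
Variables (R : realType) (N m : nat) (p : 'I_N -> R) (alpha : R).
Hypotheses (p_ge0 : forall k, 0 <= p k) (p_sum1 : \sum_(k < N) p k = 1).

Lemma wm_dist_green (G : {set 'I_N}) k : k \in G ->
  wm_dist p alpha G k = alpha * p k / (1 + (alpha - 1) * \sum_(i in G) p i).
Proof.
rewrite /wm_dist => ->; congr (_ / _).
by move: p_sum1; rewrite (bigID (mem G)) /=; lra.
Qed.

Lemma green_probE : green_prob m p alpha =
  (\sum_k alpha * p k * \sum_(G in [set G : {set 'I_N} | #|G| == m & k \in G])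
     (1 + (alpha - 1) * \sum_(i in G) p i)^-1) / 'C(N, m)%:R.
Proof.
rewrite /green_prob card_draws card_ord; congr (_ / _).
rewrite (exchange_big_dep predT) //=; apply: eq_bigr => k _; rewrite mulr_sumr.
by apply: eq_big => [G | G]; [rewrite in_set | case/andP => _ /wm_dist_green ->].
Qed.

Hypothesis alpha_ge1 : 1 <= alpha.
Variable gamma : R.
Hypotheses (gamma_ge0 : 0 <= gamma) (gamma_le1 : gamma <= 1).
Hypothesis gamma_N : gamma * N%:R = m%:R.

Lemma green_prob_ge :
  \sum_k gamma * alpha * p k /
    (1 + (alpha - 1) * gamma + (1 - gamma) * (alpha - 1) * p k)
  <= green_prob m p alpha.
Proof.
have N_gt0 : (0 < N)%N.
  by case: N p p_sum1 => // q; rewrite big_ord0 => /esym/eqP; rewrite oner_eq0.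
have N0 : 0 < N%:R :> R by rewrite ltr0n.
have m_le_N : (m <= N)%N by rewrite -(ler_nat R) -gamma_N ler_piMl.
have C0 : 0 < 'C(N, m)%:R :> R by rewrite ltr0n bin_gt0.
have alpha1_ge0 : 0 <= alpha - 1 by rewrite subr_ge0.
set A := fun k : 'I_N => [set G : {set 'I_N} | #|G| == m & k \in G].
have cardA k : #|A k|%:R = gamma * 'C(N, m)%:R.
  apply: (mulfI (lt0r_neq0 N0)); rewrite mulrA [_ * gamma]mulrC gamma_N -!natrM.
  by have := card_draws_mem m k; rewrite card_ord => ->.
have D0 (G : {set 'I_N}) : 0 < 1 + (alpha - 1) * \sum_(i in G) p i.
  by rewrite (lt_le_trans ltr01) // lerDl mulr_ge0 ?sumr_ge0.
rewrite green_probE ler_pdivlMr // mulr_suml; apply: ler_sum => k _.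
set v := 1 + (alpha - 1) * gamma + (1 - gamma) * (alpha - 1) * p k.
have v0 : 0 < v.
  rewrite /v -addrA (lt_le_trans ltr01) // lerDl.
  by rewrite addr_ge0 ?mulr_ge0 ?subr_ge0.
have mean_le : \sum_(G in A k) (1 + (alpha - 1) * \sum_(i in G) p i) <= #|A k|%:R * v.
  rewrite big_split /= sumr_const -mulr_sumr.
  have gamma_card : gamma * #|'I_N|%:R = m%:R by rewrite card_ord.
  have := sum_draws_mem_mass_le gamma_card k p_ge0 p_sum1.
  by move=> /(ler_wpM2l alpha1_ge0); rewrite /v; lra.
have := card_divr_le_sum_invr v0 (fun G _ => D0 G) mean_le.
have -> : gamma * alpha * p k / v * 'C(N, m)%:R = alpha * p k * (#|A k|%:R / v).
  by rewrite cardA; ring.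
by move=> harmonic; rewrite ler_wpM2l ?mulr_ge0 // (le_trans ler01).
Qed.

End Watermark.

Theorem lemmaE1 (R : realType) (N m : nat) (p : 'I_N -> R)
  (hp : forall k, 0 < p k < 1) (hsum : \sum_(k < N) p k = 1)
  (gamma : R) (hg : 0 < gamma < 1) (hm : gamma * N%:R = m%:R)
  (delta : R) (hd : 0 < delta) :
  let alpha := expR delta in
  green_prob m p alpha >=
    gamma * alpha / (1 + (alpha - 1) * gamma) *
    spike_entropy p ((1 - gamma) * (alpha - 1) / (1 + (alpha - 1) * gamma)).
Proof.
cbv zeta; set alpha := expR delta; have alpha_gt1 : 1 < alpha := pexpR_gt1 hd.
have [gamma_gt0 gamma_lt1] := andP hg.
have p_ge0 k : 0 <= p k by case/andP: (hp k) => /ltW.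
have c_gt0 : 0 < 1 + (alpha - 1) * gamma.
  by rewrite (lt_le_trans ltr01) // lerDl mulr_ge0 ?subr_ge0 ?ltW.
rewrite spike_entropy_div ?gt_eqF // => [|k].
  by apply: green_prob_ge => //; exact: ltW.
have : 0 <= (1 - gamma) * (alpha - 1) * p k by rewrite !mulr_ge0 // subr_ge0 ltW.
by move=> h; apply: lt0r_neq0; lra.
Qed.
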